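(* In the Group Lasso setting (linear model $\mathbf y=\mathbf X\boldsymbol\beta+\boldsymbol\epsilon$, groups of sizes $n_1,\dots,n_G$, fixed weights $w_g>0$, $\widehat{\boldsymbol\beta}=\widehat{\boldsymbol\beta}(\gamma)=\arg\min_{\boldsymbol\beta}\tfrac12\|\mathbf y-\mathbf X\boldsymbol\beta\|_2^2+\gamma\sum_g w_g\|\boldsymbol\beta_g\|_2$ for fixed $\mathbf y$), let $$\widehat{df}_\gamma=\mathrm{trace}\big[(\mathbf I_n+\gamma\mathbf B)^{-1}\mathbf A\big],\quad \mathbf A=\mathbf X_{\mathcal A_G}(\mathbf X_{\mathcal A_G}^\top\mathbf X_{\mathcal A_G})^{-1}\mathbf X_{\mathcal A_G}^\top,\ \mathbf B=\mathbf X_{\mathcal A_G}(\mathbf X_{\mathcal A_G}^\top\mathbf X_{\mathcal A_G})^{-1}\boldsymbol\Pi_{\mathcal A_G}(\mathbf X_{\mathcal A_G}^\top\mathbf X_{\mathcal A_G})^{-1}\mathbf X_{\mathcal A_G}^\top$$ (which for $\mathbf X^\top\mathbf X=\mathbf I_p$ reduce to $\mathbf A=\mathbf X_{\mathcal A_G}\mathbf X_{\mathcal A_G}^\top$, $\mathbf B=\mathbf X_{\mathcal A_G}\boldsymbol\Pi_{\mathcal A_G}\mathbf X_{\mathcal A_G}^\top$). If the matrix $\boldsymbol\Pi_{\mathcal A_G}+\gamma\,\mathrm d\boldsymbol\Pi_{\mathcal A_G}/\mathrm d\gamma$ is positive definite, then $\widehat{df}_\gamma$ is a non-increasing function of $\gamma$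 for $\gamma\in(\gamma_l,\gamma_{l+1})$.
   Context: $\boldsymbol\beta_g\in\mathbb R^{n_g}$ is the subvector for group $g$. $\mathcal A_G=\{g:\|\widehat{\boldsymbol\beta}_g\|_2\neq0\}$ is the set of active groups, $\mathbf X_{\mathcal A_G}$ the columns of $\mathbf X$ for active groups (in group order), with $\mathbf X_{\mathcal A_G}^\top\mathbf X_{\mathcal A_G}$ invertible, and $\boldsymbol\Pi_{\mathcal A_G}=\mathrm{blockdiag}_{g\in\mathcal A_G}\big(w_g[\mathbf I_{n_g}/\|\widehat{\boldsymbol\beta}_g\|_2-\widehat{\boldsymbol\beta}_g\widehat{\boldsymbol\beta}_g^\top/\|\widehat{\boldsymbol\beta}_g\|_2^3]\big)$, regarded as a function of $\gamma$ through $\widehat{\boldsymbol\beta}(\gamma)$; $\mathrm d\boldsymbol\Pi_{\mathcal A_G}/\mathrm d\gamma$ is its derivative along the solution path. Transition points $\gamma_1<\dots<\gamma_L$ are the values of $\gamma>0$ where the active set changes; on each interval $(\gamma_l,\gamma_{l+1})$ the active set is constant. *)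

From HB Require Import structures.
From mathcomp Require Import all_boot all_order all_algebra.
From mathcomp Require Import all_classical all_reals all_analysis.
Set Implicit Arguments. Unset Strict Implicit. Unset Printing Implicit Defensive.
Import Order.TTheory GRing.Theory Num.Theory.
Local Open Scope ring_scope.

Section GroupLasso.
Variables (R : realType) (n p G : nat).

(* Group membership of the p coordinates: coordinate j belongs to group grp j.
   beta_g is the subvector (beta_j)_{grp j = g}. *)

Definition gnorm (grp : 'I_p -> 'I_G) (b : 'cV[R]_p) (g : 'I_G) : R :=
  Num.sqrt (\sum_(j < p | grp j == g) b j 0 ^+ 2).

(* coordinates belonging to active groups  (union of the groups in A_G) *)
Definition active (grp : 'I_p -> 'I_G) (b : 'cV[R]_p) : {set 'I_p} :=
  [set j | gnorm grp b (grp j) != 0].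

Definition glasso_obj (X : 'M[R]_(n, p)) (y : 'cV[R]_n) (grp : 'I_p -> 'I_G)
    (w : 'I_G -> R) (gam : R) (b : 'cV[R]_p) : R :=
  2^-1 * (\sum_(i < n) ((y - X *m b) i 0) ^+ 2)
  + gam * (\sum_(g < G) w g * gnorm grp b g).

(* block-diagonal matrix  blockdiag_g ( w_g [ I/||b_g|| - b_g b_g^T/||b_g||^3 ] ),
   written on all p coordinates (entries between different groups are 0) *)
Definition PiFull (grp : 'I_p -> 'I_G) (w : 'I_G -> R) (b : 'cV[R]_p) : 'M[R]_p :=
  \matrix_(i, j) (if grp i == grp j then
      w (grp i) * ((i == j)%:R / gnorm grp b (grp i)
                   - b i 0 * b j 0 / gnorm grp b (grp i) ^+ 3)
    else 0).

Definition restr (S : {set 'I_p}) (M : 'M[R]_p) : 'M[R]_#|S| :=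
  \matrix_(i, j) M (enum_val i) (enum_val j).

Definition Xsub (S : {set 'I_p}) (X : 'M[R]_(n, p)) : 'M[R]_(n, #|S|) :=
  \matrix_(i, k) X i (enum_val k).

Definition dPi (grp : 'I_p -> 'I_G) (w : 'I_G -> R) (bhat : R -> 'cV[R]_p)
    (gam : R) : 'M[R]_p :=
  \matrix_(i, j) derive1 (fun t => PiFull grp w (bhat t) i j) gam.

Definition dfhat (X : 'M[R]_(n, p)) (grp : 'I_p -> 'I_G) (w : 'I_G -> R)
    (gam : R) (b : 'cV[R]_p) : R :=
  let S := active grp b in
  let XA := Xsub S X in
  let Ginv := invmx (XA^T *m XA) in
  let A := XA *m Ginv *m XA^T in
  let B := XA *m Ginv *m restr S (PiFull grp w b) *m Ginv *m XA^T in
  \tr (invmx (1%:M + gam *: B) *m A).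

End GroupLasso.

Definition posdef (R : realType) (m : nat) (M : 'M[R]_m) : Prop :=
  M^T = M /\ forall v : 'cV[R]_m, v != 0 -> 0 < (v^T *m M *m v) 0 0.

(* On (a, b) the active set is a fixed S, so with M := X_S^T X_S and
   N(t) := M + t Pi_S(t) the push-through identity
   (1 + U V)^-1 U = U (1 + V U)^-1 turns the estimator into tr(N(t)^-1 M).
   Each diagonal block of Pi is w_g / ||b_g|| times the projection onto b_g's
   orthogonal complement, hence positive semidefinite (Cauchy-Schwarz), so N(t)
   is invertible for t >= 0.  Differentiating N N^-1 = 1 gives
   d/dt tr(N^-1 M) = - tr(X_S N^-1 N' N^-1 X_S^T) with N' = Pi_S + t dPi_S/dt,
   which is <= 0 because N' is positive definite; the mean value theorem
   concludes. *)

From HB Require Import structures.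
From mathcomp Require Import all_boot all_order all_algebra.
From mathcomp Require Import all_classical all_reals all_analysis.
From mathcomp Require Import ring lra.
Import Order.TTheory GRing.Theory Num.Theory numFieldNormedType.Exports.
Set Implicit Arguments. Unset Strict Implicit. Unset Printing Implicit Defensive.
Local Open Scope ring_scope.

Lemma sum_mul_sqr_le (R : realFieldType) (I : finType) (P : pred I) (x y : I -> R) :
  (\sum_(i | P i) x i * y i) ^+ 2
  <= (\sum_(i | P i) x i ^+ 2) * (\sum_(i | P i) y i ^+ 2).
Proof.
set X := \sum_(i | P i) x i ^+ 2; set Y := \sum_(i | P i) y i ^+ 2.
set T := \sum_(i | P i) x i * y i.
have X0 : 0 <= X by apply: sumr_ge0 => i _; exact: sqr_ge0.
have Y0 : 0 <= Y by apply: sumr_ge0 => i _; exact: sqr_ge0.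
have [Yeq0|Ygt0] := eqVneq Y 0.
  have y0 := psumr_eq0P (fun i _ => sqr_ge0 (y i)) Yeq0.
  rewrite /T big1 ?expr0n ?mulr_ge0 // => i /y0 /eqP.
  by rewrite sqrf_eq0 => /eqP ->; rewrite mulr0.
have : 0 <= \sum_(i | P i) (Y * x i - T * y i) ^+ 2.
  by apply: sumr_ge0 => i _; exact: sqr_ge0.
rewrite (eq_bigr (fun i => Y ^+ 2 * x i ^+ 2 - 2 * Y * T * (x i * y i)
                          + T ^+ 2 * y i ^+ 2)); last by move=> i _; ring.
rewrite big_split sumrB /= -!mulr_sumr -/X -/Y -/T.
have : 0 < Y by rewrite lt_def Ygt0 Y0.
nra.
Qed.

Section QuadraticForms.
Variable R : realFieldType.

Definition psdmx m (P : 'M[R]_m) := forall v : 'cV[R]_m, 0 <= (v^T *m P *m v) 0 0.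

Lemma qformE m (P : 'M[R]_m) (v : 'cV[R]_m) :
  (v^T *m P *m v) 0 0 = \sum_i \sum_j v i 0 * P i j * v j 0.
Proof.
rewrite mxE; under eq_bigr do rewrite mxE big_distrl /=.
by rewrite exchange_big; apply: eq_bigr => i _; apply: eq_bigr => j _; rewrite !mxE.
Qed.

Lemma qformD m (P Q : 'M[R]_m) (v : 'cV[R]_m) :
  (v^T *m (P + Q) *m v) 0 0 = (v^T *m P *m v) 0 0 + (v^T *m Q *m v) 0 0.
Proof. by rewrite mulmxDr mulmxDl mxE. Qed.

Lemma qform_gram m n (Y : 'M[R]_(n, m)) (v : 'cV[R]_m) :
  (v^T *m (Y^T *m Y) *m v) 0 0 = \sum_i (Y *m v) i 0 ^+ 2.
Proof.
rewrite mulmxA -trmx_mul -mulmxA mxE.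
by apply: eq_bigr => i _; rewrite mxE expr2.
Qed.

Lemma qform_gt0_unitmx m (A : 'M[R]_m) :
  (forall v : 'cV[R]_m, v != 0 -> 0 < (v^T *m A *m v) 0 0) -> A \in unitmx.
Proof.
move=> Apos; rewrite unitmxE unitfE; apply/negP => /det0P[u u0 uA].
have := Apos u^T; rewrite trmx_eq0 trmxK uA mul0mx mxE ltxx.
by move=> /(_ u0).
Qed.

Lemma qform_gram_gt0 m n (Y : 'M[R]_(n, m)) (v : 'cV[R]_m) :
  Y^T *m Y \in unitmx -> v != 0 -> 0 < (v^T *m (Y^T *m Y) *m v) 0 0.
Proof.
move=> YYu v0; have sq_ge0 i : 0 <= (Y *m v) i 0 ^+ 2 by exact: sqr_ge0.
rewrite qform_gram lt_def sumr_ge0 ?andbT => [|i _]; last exact: sq_ge0.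
apply: contra v0 => /eqP /(psumr_eq0P (fun i _ => sq_ge0 i)) Yv0.
have Yv : Y *m v = 0.
  apply/matrixP => i j; rewrite (ord1 j) [RHS]mxE; apply/eqP.
  by rewrite -sqrf_eq0 Yv0.
by rewrite -(mulKmx YYu v) -mulmxA Yv !mulmx0.
Qed.

Lemma unitmx_gramD_psd m n (Y : 'M[R]_(n, m)) Q :
  Y^T *m Y \in unitmx -> psdmx Q -> Y^T *m Y + Q \in unitmx.
Proof.
move=> YYu Qpsd; apply: qform_gt0_unitmx => v v0; rewrite qformD.
by have := qform_gram_gt0 YYu v0; have := Qpsd v; lra.
Qed.

Lemma psdmxZ m c (P : 'M[R]_m) : 0 <= c -> psdmx P -> psdmx (c *: P).
Proof.
by move=> c0 Ppsd v; rewrite -scalemxAr -scalemxAl mxE mulr_ge0.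
Qed.

Lemma psdmx_mxsub k m (f : 'I_k -> 'I_m) (P : 'M[R]_m) :
  psdmx P -> psdmx (mxsub f f P).
Proof.
move=> Ppsd v; set E := colsub f (1%:M : 'M[R]_m).
have -> : mxsub f f P = E^T *m P *m E.
  rewrite /E trmx_mxsub trmx1 mul_rowsub_mx mul1mx mulmx_colsub mulmx1.
  by apply/matrixP => i j; rewrite !mxE.
by have := Ppsd (E *m v); rewrite trmx_mul !mulmxA.
Qed.

Lemma psdmx_trace m n (Y : 'M[R]_(m, n)) (P : 'M[R]_n) :
  psdmx P -> 0 <= \tr (Y *m P *m Y^T).
Proof.
move=> Ppsd; apply: sumr_ge0 => i _.
have := Ppsd (row i Y)^T; rewrite trmxK.
suff -> : (row i Y *m P *m (row i Y)^T) 0 0 = (Y *m P *m Y^T) i i by [].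
by rewrite -row_mul !mxE; apply: eq_bigr => k _; rewrite !mxE.
Qed.

End QuadraticForms.

Lemma posdef_psdmx (R : realType) m (P : 'M[R]_m) : posdef P -> psdmx P.
Proof.
by move=> [_ Ppos] v; have [->|/Ppos/ltW //] := eqVneq v 0; rewrite mulmx0 mxE.
Qed.

Section PushThrough.
Variables (R : comUnitRingType) (m k : nat) (U : 'M[R]_(m, k)) (V : 'M[R]_(k, m)).

Lemma mulmx_1Dmul_swap : (1%:M + U *m V) *m U = U *m (1%:M + V *m U).
Proof. by rewrite mulmxDl mulmxDr mul1mx mulmx1 mulmxA. Qed.

Lemma unitmx_1Dmul_swap : 1%:M + V *m U \in unitmx -> 1%:M + U *m V \in unitmx.
Proof.
move=> VUu; set W := invmx (1%:M + V *m U).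
suff /mulmx1_unit[] : (1%:M + U *m V) *m (1%:M - U *m W *m V) = 1%:M by [].
rewrite mulmxBr mulmx1 !mulmxA mulmx_1Dmul_swap -[U *m _ *m W]mulmxA mulmxV //.
by rewrite mulmx1 addrK.
Qed.

Lemma invmx_1Dmul_push : 1%:M + V *m U \in unitmx ->
  invmx (1%:M + U *m V) *m U = U *m invmx (1%:M + V *m U).
Proof.
move=> VUu; have UVu := unitmx_1Dmul_swap VUu.
by rewrite -[LHS](mulmxK VUu) -[_ *m U *m _]mulmxA -mulmx_1Dmul_swap mulKmx.
Qed.

End PushThrough.

Lemma mxtrace_invmx_1Dgram (R : fieldType) n k (Y : 'M[R]_(n, k)) (Q : 'M[R]_k) t :
  let M := Y^T *m Y in let G := invmx M in
  M \in unitmx -> M + t *: Q \in unitmx ->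
  \tr (invmx (1%:M + t *: (Y *m G *m Q *m G *m Y^T)) *m (Y *m G *m Y^T))
  = \tr (invmx (M + t *: Q) *m M).
Proof.
move=> M G Mu Nu; set V := t *: (G *m Q *m G *m Y^T).
(* With U := Y, 1 + U V is the matrix inverted on the left and
   1 + V U = G (M + t Q), so the inverse can be pushed through Y. *)
have GM : G *m M = 1%:M by exact: mulVmx.
have VY : 1%:M + V *m Y = G *m (M + t *: Q).
  by rewrite /V -scalemxAl -!mulmxA GM mulmxDr GM mulmx1 scalemxAr.
have VYr : (1%:M + V *m Y) *m (invmx (M + t *: Q) *m M) = 1%:M.
  by rewrite VY -mulmxA [_ *m (_ *m M)]mulmxA mulmxV // mul1mx.
have [VYu _] := mulmx1_unit VYr.
have -> : 1%:M + t *: (Y *m G *m Q *m G *m Y^T) = 1%:M + Y *m V.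
  by rewrite /V -scalemxAr !mulmxA.
rewrite !mulmxA invmx_1Dmul_push // -!mulmxA mxtrace_mulC -!mulmxA GM mulmx1.
by rewrite -(mulKmx VYu (invmx (M + t *: Q) *m M)) VYr mulmx1.
Qed.

Section PiFull.
Variables (R : realType) (p G : nat) (grp : 'I_p -> 'I_G) (w : 'I_G -> R).
Variable b : 'cV[R]_p.

Lemma PiFull_tr : (PiFull grp w b)^T = PiFull grp w b.
Proof.
apply/matrixP => i j; rewrite !mxE eq_sym.
by case: eqP => // gij; rewrite gij (eq_sym j i) [b j 0 * _]mulrC.
Qed.

Lemma qform_PiFull (v : 'cV[R]_p) :
  (v^T *m PiFull grp w b *m v) 0 0 =
  \sum_g w g * ((\sum_(j | grp j == g) v j 0 ^+ 2) / gnorm grp b g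
                - (\sum_(j | grp j == g) v j 0 * b j 0) ^+ 2 / gnorm grp b g ^+ 3).
Proof.
rewrite qformE (partition_big grp xpredT) //=; apply: eq_bigr => g _.
set r := gnorm grp b g; set T := \sum_(j | grp j == g) v j 0 * b j 0.
have row_sum i : grp i == g -> \sum_j v i 0 * PiFull grp w b i j * v j 0 =
    w g * (v i 0 ^+ 2 / r - v i 0 * b i 0 * T / r ^+ 3).
  move=> /eqP gi; under eq_bigr => j _ do
    rewrite mxE gi eq_sym (fun_if (fun x => v i 0 * x * v j 0)) mulr0 mul0r.
  rewrite -big_mkcond /= (eq_bigr (fun j => (i == j)%:R * (w g * v i 0 * v j 0 / r)
      - w g * v i 0 * b i 0 / r ^+ 3 * (v j 0 * b j 0))); last by move=> j _; ring.
  rewrite sumrB -mulr_sumr (bigD1 i) ?gi //= eqxx mul1r big1 => [|j /andP[_ ji]].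
    by rewrite addr0 -/T; ring.
  by rewrite eq_sym (negbTE ji) mul0r.
rewrite (eq_bigr _ row_sum) -mulr_sumr sumrB -!mulr_suml -/T; ring.
Qed.

Lemma psdmx_PiFull : (forall g, 0 <= w g) -> psdmx (PiFull grp w b).
Proof.
move=> w0 v; rewrite qform_PiFull; apply: sumr_ge0 => g _.
apply: mulr_ge0 (w0 g) _.
set r := gnorm grp b g; set Su := \sum_(j | _) _; set T := \sum_(j | _) _.
(* A vanishing group norm makes both divisions junk divisions by 0. *)
have [->|r_neq0] := eqVneq r 0; first by rewrite expr0n /= !invr0 !mulr0 subr0.
have r_gt0 : 0 < r by rewrite lt_def r_neq0 sqrtr_ge0.
have r2 : r ^+ 2 = \sum_(j | grp j == g) b j 0 ^+ 2.
  by rewrite sqr_sqrtr // sumr_ge0 // => j _; exact: sqr_ge0.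
have := sum_mul_sqr_le (fun j => grp j == g) (fun j => v j 0) (fun j => b j 0).
rewrite -/Su -/T -r2 => cs.
have -> : Su / r - T ^+ 2 / r ^+ 3 = (Su * r ^+ 2 - T ^+ 2) / r ^+ 3 by field.
by apply: divr_ge0; [rewrite subr_ge0 | rewrite exprn_ge0 // ltW].
Qed.
End PiFull.

Section MatrixCalculus.
Variable R : realType.
Implicit Types (t : R).

Lemma derivable_big_sum (I : Type) (r : seq I) (P : pred I) (F : I -> R -> R) t :
  (forall i, P i -> derivable (F i) t 1) ->
  derivable (fun s => \sum_(i <- r | P i) F i s) t 1.
Proof.
move=> dF; rewrite -fct_sumE.
elim/big_ind: _ => [|f g|i /dF //]; first exact: derivable_cst.
exact: derivableD.
Qed.

Lemma derivable_big_prod (I : Type) (r : seq I) (P : pred I) (F : I -> R -> R) t :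
  (forall i, P i -> derivable (F i) t 1) ->
  derivable (fun s => \prod_(i <- r | P i) F i s) t 1.
Proof.
move=> dF; rewrite -fct_prodE.
elim/big_ind: _ => [|f g|i /dF //]; first exact: derivable_cst.
exact: derivableM.
Qed.

Lemma derivable_mulmx m n k (A : R -> 'M[R]_(m, n)) (B : R -> 'M[R]_(n, k)) t :
  derivable A t 1 -> derivable B t 1 -> derivable (fun s => A s *m B s) t 1.
Proof.
move=> /derivable_mxP dA /derivable_mxP dB; apply/derivable_mxP => i j.
under eq_fun do rewrite mxE.
by apply: derivable_big_sum => l _; apply: derivableM.
Qed.

Lemma derive_mulmx m n k (A : R -> 'M[R]_(m, n)) (B : R -> 'M[R]_(n, k)) t :
  derivable A t 1 -> derivable B t 1 ->
  'D_1 (fun s => A s *m B s) t = 'D_1 A t *m B t + A t *m 'D_1 B t.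
Proof.
move=> dA dB; rewrite !derive_mx //; last exact: derivable_mulmx.
move/derivable_mxP in dA; move/derivable_mxP in dB.
apply/matrixP => i j; rewrite !mxE -big_split /=.
under eq_fun do rewrite mxE.
rewrite -fct_sumE derive_sum => [|l]; last exact: derivableM.
apply: eq_bigr => l _; rewrite deriveM // !mxE.
by rewrite [_ * B t l j]mulrC addrC.
Qed.

Lemma derivable_mxtrace m (A : R -> 'M[R]_m) t :
  derivable A t 1 -> derivable (fun s => \tr (A s)) t 1.
Proof.
by move=> /derivable_mxP dA; apply: derivable_big_sum => i _; apply: dA.
Qed.

Lemma derive_mxtrace m (A : R -> 'M[R]_m) t :
  derivable A t 1 -> 'D_1 (fun s => \tr (A s)) t = \tr ('D_1 A t).
Proof.
move=> dA; rewrite derive_mx // /mxtrace -fct_sumE derive_sum.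
  by apply: eq_bigr => i _; rewrite mxE.
by move: dA => /derivable_mxP dA i; apply: dA.
Qed.

Lemma derivable_det m (A : R -> 'M[R]_m) t :
  derivable A t 1 -> derivable (fun s => \det (A s)) t 1.
Proof.
move=> /derivable_mxP dA; apply: derivable_big_sum => sigma _.
apply: derivableM; first exact: derivable_cst.
by apply: derivable_big_prod => i _; apply: dA.
Qed.

Lemma derivable_adj m (A : R -> 'M[R]_m) t :
  derivable A t 1 -> derivable (fun s => \adj (A s)) t 1.
Proof.
move=> /derivable_mxP dA; apply/derivable_mxP => i j.
under eq_fun do rewrite mxE /cofactor.
apply: derivableM; first exact: derivable_cst.
apply: (derivable_det (A := fun s => row' j (col' i (A s)))).
by apply/derivable_mxP => k l; under eq_fun do rewrite !mxE; apply: dA.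
Qed.

Lemma near_unitmx m (A : R -> 'M[R]_m) t :
  derivable A t 1 -> A t \in unitmx -> \forall s \near t, A s \in unitmx.
Proof.
move=> dA; rewrite unitmxE unitfE => detA; near do rewrite unitmxE unitfE.
have cdet : {for t, continuous (fun s => \det (A s))}.
  exact/differentiable_continuous/derivable1_diffP/derivable_det.
exact: cvgr_neq0 cdet detA.
Unshelve. all: by end_near. Qed.

Lemma derivable_invmx m (A : R -> 'M[R]_m) t :
  derivable A t 1 -> A t \in unitmx -> derivable (fun s => invmx (A s)) t 1.
Proof.
move=> dA At.
(* invmx is the adjugate formula wherever A is invertible, hence near t. *)
apply: (@near_eq_derivable _ _ _ (fun s => (\det (A s))^-1 *: \adj (A s))).
  by near do rewrite /invmx ifT //; exact: near_unitmx.
apply/derivable_mxP => i j; under eq_fun do rewrite mxE.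
apply: derivableM; last by move: (derivable_adj dA) => /derivable_mxP; apply.
by apply: derivableV; [rewrite -unitfE -unitmxE | exact: derivable_det].
Unshelve. all: by end_near. Qed.

Lemma derive_invmx m (A : R -> 'M[R]_m) t :
  derivable A t 1 -> A t \in unitmx ->
  'D_1 (fun s => invmx (A s)) t = - (invmx (A t) *m 'D_1 A t *m invmx (A t)).
Proof.
move=> dA At; have dAi := derivable_invmx dA At.
have : 'D_1 (fun s => A s *m invmx (A s)) t = 0.
  rewrite (@near_eq_derive _ _ _ _ (cst 1%:M)) ?derive_cst //.
  by near do rewrite mulmxV //; exact: near_unitmx.
rewrite derive_mulmx // addrC => /eqP; rewrite addr_eq0 => /eqP DAi.
by rewrite -[LHS](mulKmx At) DAi mulmxN mulmxA.
Unshelve. all: by end_near. Qed.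

End MatrixCalculus.

Section PiFullPath.
Variables (R : realType) (p G : nat) (grp : 'I_p -> 'I_G) (w : 'I_G -> R).
Variables (bh : R -> 'cV[R]_p) (s : R).
Hypothesis dbh : forall j, derivable (fun t => bh t j 0) s 1.

Lemma derivable_gnorm g : gnorm grp (bh s) g != 0 ->
  derivable (fun t => gnorm grp (bh t) g) s 1.
Proof.
move=> r0; set f := fun t => \sum_(j | grp j == g) bh t j 0 ^+ 2.
have f_gt0 : 0 < f s by rewrite -sqrtr_gt0 lt_def r0 sqrtr_ge0.
have df : derivable f s 1.
  apply: derivable_big_sum => j _.
  by rewrite -(exprfctE (fun t => bh t j 0)); exact: derivableX.
apply/derivable1_diffP; apply: (@differentiable_comp _ _ _ _ f Num.sqrt).
  exact/derivable1_diffP.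
by apply/derivable1_diffP; have [] := is_derive1_sqrt f_gt0.
Qed.

Lemma derivable_PiFull i j : gnorm grp (bh s) (grp i) != 0 ->
  derivable (fun t => PiFull grp w (bh t) i j) s 1.
Proof.
move=> r0; have dr := derivable_gnorm r0.
under eq_fun do rewrite mxE; case: (grp i == grp j); last exact: derivable_cst.
apply: derivableM; first exact: derivable_cst.
apply: derivableB; apply: derivableM.
- exact: derivable_cst.
- exact: derivableV.
- by apply: derivableM; exact: dbh.
- apply: derivableV; first by rewrite expf_neq0.
  by rewrite -(exprfctE (fun t => gnorm grp (bh t) (grp i))); exact: derivableX.
Qed.
End PiFullPath.

Section GroupLassoPath.
Variables (R : realType) (n p G : nat) (X : 'M[R]_(n, p)) (grp : 'I_p -> 'I_G).
Variables (w : 'I_G -> R) (bhat : R -> 'cV[R]_p) (a b : R) (S : {set 'I_p}).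
Hypotheses (w_gt0 : forall g, 0 < w g) (a_ge0 : 0 <= a).
Hypothesis active_bhat : forall t, a < t < b -> active grp (bhat t) = S.
Hypothesis gram_unit : (Xsub S X)^T *m Xsub S X \in unitmx.
Hypothesis derivable_bhat :
  forall t, a < t < b -> forall j, derivable (fun s => bhat s j 0) t 1.
Hypothesis posdef_dN : forall t, a < t < b ->
  posdef (restr S (PiFull grp w (bhat t) + t *: dPi grp w bhat t)).

Local Notation M := ((Xsub S X)^T *m Xsub S X).
Local Notation N t := (M + t *: restr S (PiFull grp w (bhat t))).

Lemma restr_mxsub (P : 'M[R]_p) : restr S P = mxsub enum_val enum_val P.
Proof. by []. Qed.

Lemma N_unitmx t : a < t < b -> N t \in unitmx.
Proof.
move=> /andP[a_lt_t _]; apply: unitmx_gramD_psd gram_unit _.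
apply: psdmxZ; first exact: le_trans (ltW a_lt_t).
by rewrite restr_mxsub; apply/psdmx_mxsub/psdmx_PiFull => g; exact: ltW.
Qed.

Lemma dfhat_trace t : a < t < b ->
  dfhat X grp w t (bhat t) = \tr (invmx (N t) *m M).
Proof.
move=> It; rewrite /dfhat active_bhat //.
exact: mxtrace_invmx_1Dgram gram_unit (N_unitmx It).
Qed.

Lemma active_enum_val t (i : 'I_#|S|) : a < t < b ->
  gnorm grp (bhat t) (grp (enum_val i)) != 0.
Proof.
move=> It; have : enum_val i \in active grp (bhat t).
  by rewrite active_bhat ?enum_valP.
by rewrite inE.
Qed.

Lemma N_entry t i j :
  (N t) i j = M i j + t * PiFull grp w (bhat t) (enum_val i) (enum_val j).
Proof. by rewrite !mxE. Qed.

Lemma derivable_N t : a < t < b -> derivable (fun s : R => N s) t 1.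
Proof.
move=> It; apply/derivable_mxP => i j; under eq_fun do rewrite N_entry.
apply: derivableD; first exact: derivable_cst.
apply: derivableM; first exact: derivable_id.
exact: (derivable_PiFull (derivable_bhat It) (active_enum_val i It)).
Qed.

Lemma derive_N t : a < t < b ->
  'D_1 (fun s : R => N s) t = restr S (PiFull grp w (bhat t) + t *: dPi grp w bhat t).
Proof.
move=> It; rewrite derive_mx; last exact: derivable_N.
apply/matrixP => i j; rewrite [LHS]mxE; under eq_fun do rewrite N_entry.
set P := fun s => PiFull grp w (bhat s) (enum_val i) (enum_val j).
have dP : derivable P t 1.
  exact: (derivable_PiFull (derivable_bhat It) (active_enum_val i It)).
have -> : (fun s : R => M i j + s * P s) = cst (M i j) + @id R * P by [].
have did : derivable (@id R) t 1 by exact: derivable_id.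
rewrite (deriveD _ (derivableM did dP)); last exact: derivable_cst.
rewrite derive_cst add0r (deriveM did dP) derive_id.
by rewrite /P !mxE derive1E [_%:A]mulr1 addrC.
Qed.

Lemma N_tr t : (N t)^T = N t.
Proof.
rewrite linearD linearZ /= trmx_mul trmxK; congr (_ + _ *: _).
by rewrite !restr_mxsub trmx_mxsub PiFull_tr.
Qed.

Lemma derivable_trace_resolvent t : a < t < b ->
  derivable (fun s : R => \tr (invmx (N s) *m M)) t 1.
Proof.
move=> It; apply: derivable_mxtrace; apply: derivable_mulmx.
  exact: derivable_invmx (derivable_N It) (N_unitmx It).
exact: derivable_cst.
Qed.

Lemma derive_trace_resolvent_le0 t : a < t < b ->
  'D_1 (fun s : R => \tr (invmx (N s) *m M)) t <= 0.
Proof.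
move=> It; have dNi := derivable_invmx (derivable_N It) (N_unitmx It).
have dM : derivable (fun=> M) t 1 by exact: derivable_cst.
rewrite derive_mxtrace; last exact: (derivable_mulmx dNi dM).
rewrite (derive_mulmx dNi dM) derive_cst mulmx0 addr0.
rewrite (derive_invmx (derivable_N It) (N_unitmx It)) (derive_N It).
set Ni := invmx (N t); set P := restr S _.
have NiT : Ni^T = Ni by rewrite /Ni trmx_inv N_tr.
have -> : \tr (- (Ni *m P *m Ni) *m M)
    = - \tr (Xsub S X *m Ni *m P *m (Xsub S X *m Ni)^T).
  by rewrite mulNmx linearN /= trmx_mul NiT !mulmxA mxtrace_mulC !mulmxA.
by rewrite oppr_le0; apply/psdmx_trace/posdef_psdmx/posdef_dN.
Qed.

Lemma trace_resolvent_nonincreasing g1 g2 : a < g1 -> g1 <= g2 -> g2 < b ->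
  \tr (invmx (N g2) *m M) <= \tr (invmx (N g1) *m M).
Proof.
move=> a_g1 g12 g2_b.
apply: (@ler0_derive1_le_oo _ (fun s : R => \tr (invmx (N s) *m M)) a b).
- by move=> t; rewrite in_itv => It; exact: derivable_trace_resolvent.
- by move=> t; rewrite in_itv derive1E => It; exact: derive_trace_resolvent_le0.
- move=> t; rewrite mem_setE in_itv => It; apply: differentiable_continuous.
  exact/derivable1_diffP/derivable_trace_resolvent.
- by rewrite in_itv /= g2_b (lt_le_trans a_g1 g12).
- by rewrite in_itv /= a_g1 (le_lt_trans g12 g2_b).
- exact: g12.
Qed.

End GroupLassoPath.

Theorem theorem4 (R : realType) (n p G : nat) (X : 'M[R]_(n, p)) (y : 'cV[R]_n)
    (grp : 'I_p -> 'I_G) (w : 'I_G -> R) (bhat : R -> 'cV[R]_p)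
    (a b : R) (S : {set 'I_p}) :
  (forall g, 0 < w g) ->
  0 <= a -> a < b ->
  (* bhat gam is the Group Lasso solution for every gam in (a, b) *)
  (forall gam, a < gam < b -> forall beta : 'cV[R]_p,
      glasso_obj X y grp w gam (bhat gam) <= glasso_obj X y grp w gam beta) ->
  (* the active set is constant on (a, b) *)
  (forall gam, a < gam < b -> active grp (bhat gam) = S) ->
  (Xsub S X)^T *m Xsub S X \in unitmx ->
  (* the solution path is differentiable on (a, b) *)
  (forall gam, a < gam < b -> forall j, derivable (fun t => bhat t j 0) gam 1) ->
  (* Pi_A + gam dPi_A/dgam is positive definite on (a, b) *)
  (forall gam, a < gam < b ->
      posdef (restr S (PiFull grp w (bhat gam) + gam *: dPi grp w bhat gam))) ->
  forall g1 g2, a < g1 -> g1 <= g2 -> g2 < b ->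
    dfhat X grp w g2 (bhat g2) <= dfhat X grp w g1 (bhat g1).
Proof.
move=> w_gt0 a_ge0 _ _ active_bhat gram_unit derivable_bhat posdef_dN g1 g2.
move=> a_g1 g12 g2_b.
have I1 : a < g1 < b by rewrite a_g1 (le_lt_trans g12 g2_b).
have I2 : a < g2 < b by rewrite g2_b (lt_le_trans a_g1 g12).
rewrite (dfhat_trace w_gt0 a_ge0 active_bhat gram_unit I1).
rewrite (dfhat_trace w_gt0 a_ge0 active_bhat gram_unit I2).
exact: (trace_resolvent_nonincreasing w_gt0 a_ge0 active_bhat gram_unit
  derivable_bhat posdef_dN a_g1 g12 g2_b).
Qed.
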